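(* Let $x_1,x_2,\dots$ be a sequence of vectors in $\mathbb{R}^n$. Suppose there is a function $C:\mathbb{N}^n\to\mathbb{R}\setminus\{0\}$ such that for every $m\in\mathbb{N}$, $\sum_{\substack{m_1+\cdots+m_n=m\\ 0<m_1<\cdots<m_n}} C(m_1,\dots,m_n)\det[x_{m_1},x_{m_2},\dots,x_{m_n}]=0$. Then the sequence $(x_i)$ is contained in a proper linear subspace of $\mathbb{R}^n$.
   Context: $[x_{m_1},\dots,x_{m_n}]$ denotes the $n\times n$ matrix with these columns; the sum is over integer tuples. *)

From HB Require Import structures.
From mathcomp Require Import all_boot all_order all_algebra.
From mathcomp Require Import reals.
Set Implicit Arguments. Unset Strict Implicit. Unset Printing Implicit Defensive.
Import Order.TTheory GRing.Theory Num.Theory.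
Local Open Scope ring_scope.

(* Index tuples (m_1,...,m_n) with each m_i <= m, encoded as finite functions
   'I_n -> 'I_m.+1 (every admissible tuple with sum m has entries <= m). *)
Definition admissible (n m : nat) (f : {ffun 'I_n -> 'I_m.+1}) : bool :=
  [&& (\sum_(i < n) (f i : nat) == m)%N,
      [forall i : 'I_n, (0 < (f i : nat))%N] &
      [forall i : 'I_n, forall j : 'I_n, (i < j)%N ==> ((f i : nat) < (f j : nat))%N]].

Definition tuple_of (n m : nat) (f : {ffun 'I_n -> 'I_m.+1}) : {ffun 'I_n -> nat} :=
  [ffun i => (f i : nat)].

Definition colmx (R : realType) (n m : nat) (x : nat -> 'rV[R]_n)
  (f : {ffun 'I_n -> 'I_m.+1}) : 'M[R]_n :=
  \matrix_(i < n, j < n) x (f j : nat) 0 i.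

Definition detsum (R : realType) (n : nat) (C : {ffun 'I_n -> nat} -> R)
  (x : nat -> 'rV[R]_n) (m : nat) : R :=
  \sum_(f : {ffun 'I_n -> 'I_m.+1} | admissible f) C (tuple_of f) * \det (colmx x f).

From Pilot Require Import Defs.
From HB Require Import structures.
From mathcomp Require Import all_boot all_order all_algebra.
From mathcomp Require Import reals.
From mathcomp Require Import zify.
From Stdlib Require Import Classical.
Set Implicit Arguments. Unset Strict Implicit. Unset Printing Implicit Defensive.
Import Order.TTheory GRing.Theory Num.Theory.
Local Open Scope ring_scope.

(** If the x_i span R^n, let m_j be the first index at which x_1, ..., x_(m_j)
  span a space of dimension j.  Then m_1 < ... < m_n and x_(m_1), ..., x_(m_n)
  is a basis.  Any increasing tuple (f_1, ..., f_n) with independent columns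
  has f_j >= m_j, since x_(f_1), ..., x_(f_j) are j independent vectors among
  x_1, ..., x_(f_j).  Hence for m = m_1 + ... + m_n the sum in the hypothesis
  has the single nonzero term C(m_1, ..., m_n) det[x_(m_1), ..., x_(m_n)]. *)

Lemma row_free_rowsub (F : fieldType) m1 m2 n (f : 'I_m2 -> 'I_m1)
    (A : 'M[F]_(m1, n)) :
  injective f -> row_free A -> row_free (rowsub f A).
Proof.
move=> f_inj freeA; apply: inj_row_free => v.
rewrite rowsubE mulmxA => /eqP; rewrite mulmx_free_eq0 // => /eqP vf0.
apply/rowP => i; have := congr1 (fun w : 'rV_m1 => w 0 (f i)) vf0.
rewrite !mxE (bigD1 i) //= big1 => [|k ki]; rewrite !mxE ?eqxx ?mulr1 ?addr0 //.
by rewrite (inj_eq f_inj) (negbTE ki) mulr0.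
Qed.

Section PrefixSpan.
Variables (F : fieldType) (n : nat) (x : nat -> 'rV[F]_n).

Definition prefix_span k : 'M[F]_n := (\sum_(i < k) <<x i.+1>>)%MS.

Lemma prefix_span0 : prefix_span 0 = 0.
Proof. by rewrite /prefix_span big_ord0. Qed.

Lemma prefix_spanS k : prefix_span k.+1 = (prefix_span k + <<x k.+1>>)%MS.
Proof. by rewrite /prefix_span big_ord_recr. Qed.

Lemma prefix_span_homo k l : (k <= l)%N -> (prefix_span k <= prefix_span l)%MS.
Proof.
move=> /subnK <-; elim: (l - k)%N => [|p IH]; first by rewrite add0n.
by apply: submx_trans IH _; rewrite addSn prefix_spanS addsmxSl.
Qed.

Lemma rank_prefix_span_homo k l :
  (k <= l)%N -> (\rank (prefix_span k) <= \rank (prefix_span l))%N.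
Proof. by move=> le_kl; apply/mxrankS/prefix_span_homo. Qed.

Lemma rank_prefix_spanS k :
  (\rank (prefix_span k.+1) <= (\rank (prefix_span k)).+1)%N.
Proof.
rewrite prefix_spanS; apply: leq_trans (mxrank_adds_leqif _ _) _.
by rewrite genmxE -[X in (_ <= X)%N]addn1 leq_add2l rank_leq_row.
Qed.

Lemma sub_prefix_span i k : (0 < i)%N -> (i <= k)%N -> (x i <= prefix_span k)%MS.
Proof.
case: i => // i _ le_ik; apply: submx_trans (prefix_span_homo le_ik).
by rewrite prefix_spanS (submx_trans _ (addsmxSr _ _)) ?genmxE.
Qed.

Lemma rank_prefix_span_max :
  exists k0, forall k, (\rank (prefix_span k) <= \rank (prefix_span k0))%N.
Proof.
suff bounded b k : (n - \rank (prefix_span k) <= b)%N ->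
    exists k0, forall k, (\rank (prefix_span k) <= \rank (prefix_span k0))%N.
  by apply: (bounded n 0%N); exact: leq_subr.
elim: b k => [|b IH] k0 le_b.
  exists k0 => k; have := rank_leq_col (prefix_span k); lia.
case: (classic (exists k, \rank (prefix_span k0) < \rank (prefix_span k))%N).
  by case=> k lt_k; apply: (IH k); lia.
move=> no_larger; exists k0 => k; rewrite leqNgt; apply/negP => lt_k.
by apply: no_larger; exists k.
Qed.

Lemma prefix_span_stable :
  exists k0, forall i, (0 < i)%N -> (x i <= prefix_span k0)%MS.
Proof.
have [k0 k0_max] := rank_prefix_span_max; exists k0 => i i_gt0.
have sub_k0 := prefix_span_homo (leq_maxr i k0).
apply: submx_trans (sub_prefix_span i_gt0 (leq_maxl i k0)) _.
by rewrite -(geq_leqif (mxrank_leqif_sup sub_k0)).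
Qed.

End PrefixSpan.

Section Greedy.
Variables (F : fieldType) (n : nat) (x : nat -> 'rV[F]_n) (K : nat).
Hypothesis rank_full : \rank (prefix_span x K) = n.

Local Notation rank_upto k := (\rank (prefix_span x k)).

Lemma exists_rank_gt (j : 'I_n) : exists k, (j < rank_upto k)%N.
Proof. by exists K; rewrite rank_full. Qed.

(* Indexed from 0: [greedy j] is m_(j+1) in the notation above. *)
Definition greedy (j : 'I_n) : nat := ex_minn (exists_rank_gt j).

Lemma greedy_rank (j : 'I_n) : (j < rank_upto (greedy j))%N.
Proof. by rewrite /greedy; case: ex_minnP. Qed.

Lemma greedy_min (j : 'I_n) k : (j < rank_upto k)%N -> (greedy j <= k)%N.
Proof. by rewrite /greedy; case: ex_minnP => g _ g_min /g_min. Qed.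

Lemma greedy_gt0 (j : 'I_n) : (0 < greedy j)%N.
Proof.
by have := greedy_rank j; case: (greedy j) => //; rewrite prefix_span0 mxrank0.
Qed.

Lemma greedy_increasing (i j : 'I_n) : (i < j)%N -> (greedy i < greedy j)%N.
Proof.
move=> lt_ij; rewrite ltn_neqAle greedy_min ?andbT; last first.
  exact: ltn_trans lt_ij (greedy_rank j).
apply/eqP => eq_g; move: (greedy_gt0 j) (greedy_rank j); rewrite -eq_g.
case g_i: (greedy i) => [|p] // _ rank_gt.
have : (rank_upto p <= i)%N.
  by rewrite leqNgt; apply/negP => /greedy_min; rewrite g_i ltnn.
have := rank_prefix_spanS x p; lia.
Qed.

Lemma greedy_jump (j : 'I_n) k :
  rank_upto k = j -> rank_upto k.+1 = j.+1 -> greedy j = k.+1.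
Proof.
move=> rank_k rank_k1; apply/eqP; rewrite eqn_leq greedy_min ?rank_k1 //=.
rewrite ltnNge; apply/negP => /(rank_prefix_span_homo x).
by have := greedy_rank j; rewrite rank_k; lia.
Qed.

Local Notation greedy_mx := (\matrix_(j < n) x (greedy j)).

Lemma prefix_span_sub_greedy k : (prefix_span x k <= greedy_mx)%MS.
Proof.
elim: k => [|k IH]; first by rewrite prefix_span0 sub0mx.
have [same | jump] :
    rank_upto k.+1 = rank_upto k \/ rank_upto k.+1 = (rank_upto k).+1.
  have := rank_prefix_spanS x k.
  by have := rank_prefix_span_homo x (leqnSn k); lia.
- apply: submx_trans IH.
  by rewrite -(geq_leqif (mxrank_leqif_sup (prefix_span_homo x (leqnSn k)))) same.
- have lt_n : (rank_upto k < n)%N.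
    by have := rank_leq_col (prefix_span x k.+1); lia.
  rewrite prefix_spanS addsmx_sub IH genmxE.
  suff -> : x k.+1 = row (Ordinal lt_n) greedy_mx by exact: row_sub.
  by rewrite rowK (greedy_jump (j := Ordinal lt_n) (k := k)).
Qed.

Lemma row_free_greedy : row_free greedy_mx.
Proof.
by rewrite -row_leq_rank -{1}rank_full mxrankS ?prefix_span_sub_greedy.
Qed.

Lemma greedy_le_free (f : 'I_n -> nat) :
    (forall i, 0 < f i)%N -> (forall i j : 'I_n, i < j -> f i < f j)%N ->
    row_free (\matrix_(i < n) x (f i)) ->
  forall j, (greedy j <= f j)%N.
Proof.
move=> f_gt0 f_incr free_f j; apply: greedy_min.
have f_homo (i : 'I_n) : (i <= j)%N -> (f i <= f j)%N.
  by rewrite leq_eqVlt => /orP [/eqP/val_inj -> // | /f_incr/ltnW].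
pose B := rowsub (widen_ord (ltn_ord j)) (\matrix_(i < n) x (f i)).
have /eqP rank_B : row_free B.
  by apply: row_free_rowsub => // i1 i2 [] /val_inj.
rewrite -[X in (X <= _)%N]rank_B mxrankS //; apply/row_subP => i.
rewrite row_rowsub rowK sub_prefix_span ?f_gt0 ?f_homo //=.
by rewrite -ltnS.
Qed.

End Greedy.

Lemma colmxE (R : realType) n m (x : nat -> 'rV[R]_n)
    (f : {ffun 'I_n -> 'I_m.+1}) :
  colmx x f = (\matrix_(j < n) x (f j : nat))^T.
Proof. by apply/matrixP => i j; rewrite !mxE. Qed.

Section GreedyTuple.
Variables (R : realType) (n : nat) (x : nat -> 'rV[R]_n) (K : nat).
Hypothesis rank_full : \rank (prefix_span x K) = n.

Local Notation m := (greedy rank_full).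
Local Notation weight := (\sum_(j < n) m j)%N.

Lemma greedy_le_weight j : (m j < weight.+1)%N.
Proof. by rewrite ltnS (bigD1 j) //= leq_addr. Qed.

Definition greedy_tuple : {ffun 'I_n -> 'I_weight.+1} := [ffun j => inord (m j)].

Lemma greedy_tupleE j : (greedy_tuple j : nat) = m j.
Proof. by rewrite ffunE inordK ?greedy_le_weight. Qed.

Lemma greedy_tuple_admissible : admissible greedy_tuple.
Proof.
apply/and3P; split.
- by apply/eqP/eq_bigr => j _; rewrite greedy_tupleE.
- by apply/forallP => j; rewrite greedy_tupleE greedy_gt0.
- apply/forallP => i; apply/forallP => j; apply/implyP => lt_ij.
  by rewrite !greedy_tupleE greedy_increasing.
Qed.

Lemma det_colmx_greedy : \det (colmx x greedy_tuple) != 0.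
Proof.
have -> : colmx x greedy_tuple = (\matrix_(j < n) x (m j))^T.
  by apply/matrixP => i j; rewrite !mxE greedy_tupleE.
by rewrite det_tr -unitfE -unitmxE -row_free_unit row_free_greedy.
Qed.

Lemma admissible_det_eq_greedy f :
  admissible f -> \det (colmx x f) != 0 -> f = greedy_tuple.
Proof.
move=> /and3P [/eqP sum_f /forallP f_gt0 /forallP f_incr] det_f.
have free_f : row_free (\matrix_(j < n) x (f j : nat)).
  by rewrite row_free_unit unitmxE unitfE -det_tr -colmxE.
have m_le_f := greedy_le_free rank_full f_gt0
  (fun i j => implyP (forallP (f_incr i) j)) free_f.
have := (leqif_sum (fun j (_ : true) => leqif_eq (m_le_f j))).2.
rewrite sum_f eqxx => /esym/forallP m_eq_f.
apply/ffunP => j; apply/eqP; rewrite -val_eqE /= greedy_tupleE eq_sym.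
exact: m_eq_f.
Qed.

Lemma detsum_greedy (C : {ffun 'I_n -> nat} -> R) :
  detsum C x weight =
    C (Defs.tuple_of greedy_tuple) * \det (colmx x greedy_tuple).
Proof.
rewrite /detsum (bigD1 greedy_tuple) ?greedy_tuple_admissible //=.
rewrite [X in _ + X]big1 ?addr0 //.
move=> f /andP [adm_f ne_f]; have [-> | det_f] := eqVneq (\det (colmx x f)) 0.
  by rewrite mulr0.
by rewrite (admissible_det_eq_greedy adm_f det_f) eqxx in ne_f.
Qed.

End GreedyTuple.

Theorem lemma1 (R : realType) (n : nat) (x : nat -> 'rV[R]_n)
  (C : {ffun 'I_n -> nat} -> R)
  (HC : forall t, C t != 0)
  (Hsum : forall m : nat, detsum C x m = 0) :
  exists U : 'M[R]_n, (\rank U < n)%N /\ (forall i : nat, (0 < i)%N -> (x i <= U)%MS).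
Proof.
have [K x_sub] := prefix_span_stable x.
have [rank_lt | rank_ge] := ltnP (\rank (prefix_span x K)) n.
  by exists (prefix_span x K).
have rank_full : \rank (prefix_span x K) = n.
  by apply/eqP; rewrite eqn_leq rank_leq_col rank_ge.
have /eqP := Hsum (\sum_(j < n) greedy rank_full j)%N.
by rewrite detsum_greedy mulf_eq0 (negbTE (HC _)) (negbTE (det_colmx_greedy _)).
Qed.
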